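(* Let $\lambda=(\lambda_1,\dots,\lambda_l)$ and $\mu=(\mu_1,\dots,\mu_m)$ be decompositions of $n$ (all parts positive) with $\mu_m\le\lambda_l$. Then $$|P_{\lambda|\mu}|=2^{\mu_m(\lambda_l-\mu_m)}\,|\mathrm{GL}_{\mu_m}(\mathbb{F}_2)|\cdot|P_{\widetilde\lambda|\widetilde\mu}|,$$ where $\widetilde\lambda=(\lambda_1,\dots,\lambda_{l-1},\lambda_l-\mu_m)$ and $\widetilde\mu=(\mu_1,\dots,\mu_{m-1})$, both decompositions of $n-\mu_m$.
   Context: For a decomposition $\lambda=(\lambda_1,\dots,\lambda_l)$ of $N$ (zero parts are omitted; the empty decomposition is the decomposition of $0$, with $\mathrm{GL}_0$ and all associated groups trivial), $P_\lambda\le\mathrm{GL}_N(\mathbb{F}_2)$ is the standard parabolic subgroup of invertible block upper triangular matrices with diagonal blocks of sizes $\lambda_1,\dots,\lambda_l$ in this order. $P_\mu^t$ is the group of transposes of elements of $P_\mu$, and $P_{\lambda|\mu}=P_\lambda\cap P_\mu^t$ for decompositions $\lambda,\mu$ of the same $N$. *)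

From mathcomp Require Import all_boot all_algebra all_fingroup.
Set Implicit Arguments. Unset Strict Implicit. Unset Printing Implicit Defensive.
Import GRing.Theory.
Local Open Scope ring_scope.

Definition decomposition (N : nat) (lam : seq nat) : bool :=
  all (fun x => 0 < x)%N lam && (sumn lam == N).

(* Block index (0-based) of the row/column index i for the decomposition lam:
   the number of blocks lying entirely before position i. *)
Definition blk (lam : seq nat) (i : nat) : nat :=
  count (fun k => sumn (take k.+1 lam) <= i)%N (iota 0 (size lam)).

Definition blockUT (lam : seq nat) (N : nat) (A : 'M['F_2]_N) : bool :=
  [forall i : 'I_N, forall j : 'I_N, (blk lam j < blk lam i)%N ==> (A i j == 0)].

Definition Parab (lam : seq nat) (N : nat) : {set 'M['F_2]_N} :=
  [set A : 'M['F_2]_N | (A \in unitmx) && blockUT lam A].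

Definition ParabT (mu : seq nat) (N : nat) : {set 'M['F_2]_N} :=
  [set A^T | A in Parab mu N].

Definition Parab2 (lam mu : seq nat) (N : nat) : {set 'M['F_2]_N} :=
  Parab lam N :&: ParabT mu N.

Definition GLset (k : nat) : {set 'M['F_2]_k} := [set A : 'M['F_2]_k | A \in unitmx].

Definition lam_tilde (lam mu : seq nat) : seq nat :=
  filter (fun x => 0 < x)%N (rcons (take (size lam).-1 lam) (last 0 lam - last 0 mu))%N.

Definition mu_tilde (mu : seq nat) : seq nat := take (size mu).-1 mu.

From mathcomp Require Import all_boot all_algebra all_fingroup.
From mathcomp Require Import zify.
Set Implicit Arguments. Unset Strict Implicit. Unset Printing Implicit Defensive.
Import GRing.Theory.

(* Write lam = (lam', a + k) and mu = (mu', k).  The block conditions force an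
   element of P_{lam|mu} to be block lower triangular [[M, 0], [(0 C), D]]
   with D in GL_k, M in P_{lam~|mu~} and C an arbitrary k x a matrix sitting
   under the last a columns; conversely every such matrix lies in P_{lam|mu}.
   Hence P_{lam|mu} is in bijection with P_{lam~|mu~} x GL_k x M_{k,a}(F_2). *)

Lemma blk_rcons s x i : blk (rcons s x) i = blk s i + (sumn s + x <= i).
Proof.
rewrite /blk size_rcons -addn1 iotaD count_cat /= add0n addn0.
congr (_ + _); last by rewrite take_oversize ?size_rcons // sumn_rcons.
apply: eq_in_count => k; rewrite mem_iota add0n => /andP[_ lt_k].
by rewrite -cats1 takel_cat.
Qed.

Lemma blk_rcons_lt s x i : i < sumn s + x -> blk (rcons s x) i = blk s i.
Proof. by move=> lt_i; rewrite blk_rcons leqNgt lt_i addn0. Qed.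

Lemma blk_le_size s i : blk s i <= size s.
Proof. by rewrite /blk -{2}(size_iota 0 (size s)) count_size. Qed.

Lemma blk_sumn_le s i : sumn s <= i -> blk s i = size s.
Proof.
elim/last_ind: s => [|s x IHs]; first by rewrite /blk.
rewrite sumn_rcons size_rcons blk_rcons => le_i.
by rewrite le_i IHs ?addn1 //; apply: leq_trans le_i; apply: leq_addr.
Qed.

Lemma blk_lt_size s i : i < sumn s -> blk s i < size s.
Proof.
case/lastP: s => [//|s x]; rewrite sumn_rcons size_rcons => lt_i.
by rewrite blk_rcons_lt // ltnS blk_le_size.
Qed.

Lemma blk_lt_sumn s i j : i < sumn s <= j -> blk s i < blk s j.
Proof. by case/andP=> lt_i le_j; rewrite (blk_sumn_le le_j) blk_lt_size. Qed.

Local Open Scope ring_scope.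

Lemma mem_ParabT mu N (A : 'M['F_2]_N) : (A \in ParabT mu N) = (A^T \in Parab mu N).
Proof.
apply/imsetP/idP => [[B PB ->]|PA]; first by rewrite trmxK.
by exists A^T; rewrite ?trmxK.
Qed.

Lemma Parab2P lam mu N (A : 'M['F_2]_N) :
  reflect [/\ A \in unitmx,
              forall i j : 'I_N, (blk lam j < blk lam i)%N -> A i j = 0
            & forall i j : 'I_N, (blk mu i < blk mu j)%N -> A i j = 0]
          (A \in Parab2 lam mu N).
Proof.
rewrite inE mem_ParabT !inE unitmx_tr /blockUT.
apply: (iffP idP) => [|[uA lamA muA]].
  case/andP=> /andP[-> /forallP lamA] /andP[_ /forallP muA]; split=> // i j lt_ij.
    by have /forallP/(_ j)/implyP/(_ lt_ij)/eqP := lamA i.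
  by have /forallP/(_ i)/implyP/(_ lt_ij)/eqP := muA j; rewrite mxE.
rewrite uA; apply/andP; split; apply/forallP => i; apply/forallP => j.
  by apply/implyP => /lamA ->.
by apply/implyP => /muA; rewrite mxE => ->.
Qed.

Lemma eq_Parab2l lam1 lam2 mu N :
  (forall i, (i < N)%N -> blk lam1 i = blk lam2 i) ->
  Parab2 lam1 mu N = Parab2 lam2 mu N.
Proof.
move=> eq_blk; apply/setP => A.
apply/Parab2P/Parab2P => -[uA lamA muA]; split=> // i j.
  by rewrite -!eq_blk //; apply: lamA.
by rewrite !eq_blk //; apply: lamA.
Qed.

Section LowerBlock.

Variables (R : nzRingType) (p a k : nat).

Definition lblock_mx (x : 'M[R]_(p + a) * 'M[R]_k * 'M[R]_(k, a)) :
    'M[R]_(p + a + k) :=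
  block_mx x.1.1 0 (row_mx 0 x.2) x.1.2.

Lemma lblock_mx_inj : injective lblock_mx.
Proof.
by move=> [[M1 D1] C1] [[M2 D2] C2] /eq_block_mx[/= -> _ /eq_row_mx[_ ->] ->].
Qed.

End LowerBlock.
Arguments lblock_mx {R p a k}.

Lemma unitmx_lblock (R : comUnitRingType) p a k x :
  (@lblock_mx R p a k x \in unitmx) = (x.1.1 \in unitmx) && (x.1.2 \in unitmx).
Proof. by rewrite unitmxE det_lblock unitrM -!unitmxE. Qed.

Section ParabolicRcons.

Variables (lam mu : seq nat) (a k : nat).
Hypothesis sumn_mu : sumn mu = (sumn lam + a)%N.

(* Indices past [sumn lam] all lie in block [size lam], so
   [Parab2 lam mu (sumn lam + a)] is P_{lam~|mu~} with lam~ = (lam, a). *)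

Local Notation N := (sumn lam + a + k)%N.
Local Notation lam_ext := (rcons lam (a + k)).
Local Notation mu_ext := (rcons mu k).

Lemma blk_lam_ext (i : 'I_N) : blk lam_ext i = blk lam i.
Proof. by rewrite blk_rcons_lt // addnA. Qed.

Lemma blk_mu_ext (i : 'I_N) : blk mu_ext i = blk mu i.
Proof. by rewrite blk_rcons_lt // sumn_mu. Qed.

Lemma lblock_mx_Parab2 x :
  x.1.1 \in Parab2 lam mu (sumn lam + a) -> x.1.2 \in GLset k ->
  lblock_mx x \in Parab2 lam_ext mu_ext N.
Proof.
move=> /Parab2P[uM lamM muM]; rewrite inE => uD.
apply/Parab2P; split; first by rewrite unitmx_lblock uM.
- move=> i j; rewrite !blk_lam_ext -(splitK i) -(splitK j).
  case: (split i) => [i1|i2]; case: (split j) => [j1|j2] /=.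
  + by rewrite block_mxEul; apply: lamM.
  + by rewrite block_mxEur mxE.
  + rewrite block_mxEdl -(splitK j1); case: (split j1) => [j3|j4] /=.
      by rewrite row_mxEl mxE.
    by rewrite !blk_sumn_le ?ltnn //; lia.
  + by rewrite !blk_sumn_le ?ltnn //; lia.
- move=> i j; rewrite !blk_mu_ext -(splitK i) -(splitK j).
  case: (split i) => [i1|i2]; case: (split j) => [j1|j2] /=.
  + by rewrite block_mxEul; apply: muM.
  + by rewrite block_mxEur mxE.
  + by rewrite blk_sumn_le ?sumn_mu ?leq_addr // ltnNge blk_le_size.
  + by rewrite blk_sumn_le ?sumn_mu ?leq_addr // ltnNge blk_le_size.
Qed.

Lemma Parab2_lblock_mx A : A \in Parab2 lam_ext mu_ext N ->
  exists2 x, x \in setX (setX (Parab2 lam mu (sumn lam + a)) (GLset k)) setT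
           & A = lblock_mx x.
Proof.
move=> /Parab2P[uA lamA muA].
have ur0 : ursubmx A = 0.
  apply/matrixP => i j; rewrite !mxE; apply: muA; rewrite !blk_mu_ext /=.
  by apply: blk_lt_sumn; rewrite sumn_mu ltn_ord leq_addr.
have dl0 : lsubmx (dlsubmx A) = 0.
  apply/matrixP => i j; rewrite !mxE; apply: lamA; rewrite !blk_lam_ext /=.
  by apply: blk_lt_sumn; rewrite ltn_ord -addnA leq_addr.
have defA : A = lblock_mx (ulsubmx A, drsubmx A, rsubmx (dlsubmx A)).
  by rewrite /lblock_mx /= -ur0 -dl0 hsubmxK submxK.
exists (ulsubmx A, drsubmx A, rsubmx (dlsubmx A)) => //.
move: uA; rewrite {1}defA unitmx_lblock => /andP[/= uM uD].
rewrite !in_setX in_setT [_ \in GLset _]inE uD !andbT.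
apply/Parab2P; split=> // i j lt_ij; rewrite !mxE.
  by apply: lamA; rewrite !blk_lam_ext.
by apply: muA; rewrite !blk_mu_ext.
Qed.

Lemma card_Parab2_rcons :
  #|Parab2 lam_ext mu_ext N| =
    (2 ^ (k * a) * #|GLset k| * #|Parab2 lam mu (sumn lam + a)|)%N.
Proof.
have -> : Parab2 lam_ext mu_ext N =
    lblock_mx @: setX (setX (Parab2 lam mu (sumn lam + a)) (GLset k)) setT.
  apply/setP => A; apply/idP/imsetP; first exact: Parab2_lblock_mx.
  by case=> -[[M D] C] /setXP[/setXP[PM GD] _] ->; apply: lblock_mx_Parab2.
rewrite card_imset; last exact: lblock_mx_inj.
rewrite !cardsX cardsT card_mx card_Fp //.
by rewrite mulnC [(#|Parab2 _ _ _| * _)%N]mulnC mulnA.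
Qed.

End ParabolicRcons.

Lemma mu_tilde_rcons mu k : mu_tilde (rcons mu k) = mu.
Proof. by rewrite /mu_tilde size_rcons /= -cats1 take_size_cat. Qed.

Lemma blk_lam_tilde lam mu a k : all (fun y => 0 < y)%N lam ->
  forall i, (i < sumn lam + a)%N ->
  blk (lam_tilde (rcons lam (a + k)) (rcons mu k)) i = blk lam i.
Proof.
move=> pos_lam i lt_i; rewrite /lam_tilde !last_rcons addnK size_rcons /=.
rewrite -[rcons lam _]cats1 take_size_cat // filter_rcons (all_filterP pos_lam).
by case: ifP => // _; apply: blk_rcons_lt.
Qed.

Theorem proposition1 (n : nat) (lam mu : seq nat) :
  decomposition n lam -> decomposition n mu ->
  lam != [::] -> mu != [::] ->
  (last 0 mu <= last 0 lam)%N ->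
  #|Parab2 lam mu n| =
    (2 ^ (last 0 mu * (last 0 lam - last 0 mu)) * #|GLset (last 0 mu)|
     * #|Parab2 (lam_tilde lam mu) (mu_tilde mu) (n - last 0 mu)|)%N.
Proof.
case/lastP: lam => // lam x; case/lastP: mu => // mu k.
move=> /andP[pos_lam /eqP <-] /andP[_ /eqP sum_mu] _ _.
rewrite !last_rcons all_rcons in pos_lam * => le_kx.
case/andP: pos_lam => _ pos_lam.
have [a def_x] : exists a, x = (a + k)%N by exists (x - k)%N; rewrite subnK.
rewrite mu_tilde_rcons def_x sumn_rcons addnK addnA addnK.
rewrite (eq_Parab2l _ (blk_lam_tilde _ _ pos_lam)) card_Parab2_rcons //.
by move: sum_mu; rewrite !sumn_rcons def_x; lia.
Qed.
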